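(* Let $p,q$ be positive integers and let $s_1,\dots,s_p,d_1,\dots,d_q:[0,1]\to[0,1]$ be the truth functions of the hedge connectives of FLn with many hedges; that is, writing $s_0=d_0=\mathrm{id}_{[0,1]}$, for all $a,b\in[0,1]$: (1) $a\Rightarrow b\ \le\ h(a)\Rightarrow h(b)$ for every $h\in\{s_1,\dots,s_p,d_1,\dots,d_q\}$; (2) $s_i(a)\le s_{i-1}(a)$ for $i=1,\dots,p$; (3) $s_p(1)=1$; (4) $d_{j-1}(a)\le d_j(a)$ for $j=1,\dots,q$; (5) $d_q(0)=0$. Then for every $i=1,\dots,p$, $s_i$ is subdiagonal, i.e. $s_i(a)\le a$ for all $a\in[0,1]$.
   Context: Truth values form the Łukasiewicz algebra on $[0,1]$ with $a\Rightarrow b=\min(1,1-a+b)$. FLn with many hedges extends the first-order fuzzy logic FLn (with logical constants $\overline{a}$ for each $a\in[0,1]$) by truth-stressing hedges $s_1,\dots,s_p$ and truth-depressing hedges $d_1,\dots,d_q$ ($s_0,d_0$ denote the identity), with degree-1 logical axioms $(A\to B)\to(hA\to hB)$, $s_iA\to s_{i-1}A$, $s_p\overline{1}$, $d_{j-1}A\to d_jA$, $\neg d_q\overline{0}$. Conditions (1)–(5) express that these axioms have truth value 1 in every structure, where $\mathcal{D}(hA)=h(\mathcal{D}(A))$. *)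

From mathcomp Require Import all_boot all_order all_algebra.
From mathcomp Require Import reals.
Set Implicit Arguments. Unset Strict Implicit. Unset Printing Implicit Defensive.
Import Order.TTheory GRing.Theory Num.Theory.
Local Open Scope ring_scope.

Definition unit01 {R : realType} (a : R) : Prop := 0 <= a /\ a <= 1.

Definition luk_imp {R : realType} (a b : R) : R := Num.min 1 (1 - a + b).

From mathcomp Require Import all_boot all_order all_algebra.
From mathcomp Require Import reals.
Import Order.TTheory GRing.Theory Num.Theory.
Local Open Scope ring_scope.

(* Axiom (2) alone gives the chain [s i a <= s (i-1) a <= ... <= s 0 a = a]. *)

Lemma le_nonincr_chain (disp : Order.disp_t) (T : porderType disp)
    (x : nat -> T) (n : nat) :
  (forall i, (i < n)%N -> (x i.+1 <= x i)%O) -> (x n <= x 0%N)%O.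
Proof.
elim: n => [|n IH] step //.
apply: le_trans (step n (ltnSn n)) (IH _) => i lt_in.
exact/step/ltnW.
Qed.

Theorem mainTheorem2 (R : realType) (p q : nat) (s d : nat -> R -> R)
  (hp : (0 < p)%N) (hq : (0 < q)%N)
  (s0 : forall a, unit01 a -> s 0%N a = a)
  (d0 : forall a, unit01 a -> d 0%N a = a)
  (s_range : forall i a, (1 <= i <= p)%N -> unit01 a -> unit01 (s i a))
  (d_range : forall j a, (1 <= j <= q)%N -> unit01 a -> unit01 (d j a))
  (H1s : forall i a b, (1 <= i <= p)%N -> unit01 a -> unit01 b ->
          luk_imp a b <= luk_imp (s i a) (s i b))
  (H1d : forall j a b, (1 <= j <= q)%N -> unit01 a -> unit01 b ->
          luk_imp a b <= luk_imp (d j a) (d j b))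
  (H2 : forall i a, (1 <= i <= p)%N -> unit01 a -> s i a <= s i.-1 a)
  (H3 : s p 1 = 1)
  (H4 : forall j a, (1 <= j <= q)%N -> unit01 a -> d j.-1 a <= d j a)
  (H5 : d q 0 = 0) :
  forall i a, (1 <= i <= p)%N -> unit01 a -> s i a <= a.
Proof.
move=> i a /andP[_ le_ip] a01.
rewrite -[leRHS](s0 a a01).
apply: (@le_nonincr_chain _ R (fun k => s k a) i) => k lt_ki.
exact: H2 k.+1 a (leq_trans lt_ki le_ip) a01.
Qed.
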